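(* Let $V$ and $W$ be finite-dimensional simple Yetter-Drinfeld modules over $H=B(n,w,\gamma)$. Then $V\cong W$ if and only if there exist $\alpha,\beta\in\Bbbk^*$ and $r,i\in\mathbb{Z}$ such that both $V$ and $W$ contain a standard element of type $(\alpha,\beta,x^rg^i)$.
   Context: $\Bbbk$ is an algebraically closed field of characteristic $0$; $n,w$ positive integers, $\gamma$ a primitive $n$-th root of unity. $H=B(n,w,\gamma)$ is the Hopf algebra generated by $x^{\pm1},g,y$ with relations $xx^{-1}=x^{-1}x=1$, $xg=gx$, $xy=yx$, $yg=\gamma gy$, $y^n=1-x^w=1-g^n$, with $\Delta(x)=x\otimes x$, $\Delta(g)=g\otimes g$, $\Delta(y)=y\otimes g+1\otimes y$, $\varepsilon(x)=\varepsilon(g)=1$, $\varepsilon(y)=0$, $S(x)=x^{-1}$, $S(g)=g^{-1}$, $S(y)=-yg^{-1}$; $G(H)=\{g^jx^k\}$. A (left-left) Yetter-Drinfeld module is a left $H$-module, left $H$-comodule $(V,\cdot,\delta)$ with $\delta(h\cdot v)=h_{(1)}v_{(-1)}S(h_{(3)})\otimes h_{(2)}\cdot v_{(0)}$; simple means no nonzero proper Yetter-Drinfeld submodules; isomorphism means isomorphism of Yetter-Drinfeld modules. A nonzero $v\in V$ is a standard element of type $(\alpha,\beta,h)$ if $h\in G(H)$, $\alpha,\beta\in\Bbbk^*$, $x\cdot v=\alpha v$, $g\cdot v=\beta v$, $\delta(v)=h\otimes v$. *)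

From HB Require Import structures.
From mathcomp Require Import all_boot all_order all_algebra.
Set Implicit Arguments. Unset Strict Implicit. Unset Printing Implicit Defensive.
Import GRing.Theory.
Local Open Scope ring_scope.

(* The Hopf algebra H = B(n,w,gam) is modelled through its PBW basis
   { x^a g^j y^l : a : int, 0 <= j < n, 0 <= l < n }.
   A basis index (a, j, l) : Bidx stands for x^a g^j y^l. Elements of H
   (resp. H (x) H, H (x) H (x) H) are formal finite linear combinations
   (lists of (coefficient, basis index)), compared through [fcoef]. *)
Definition Bidx := (int * nat * nat)%type.

Section HopfB.
Variables (K : fieldType) (n w : nat) (gam : K).

Definition fsum (T : Type) := seq (K * T).

Definition fcoef (T : eqType) (s : fsum T) (t : T) : K :=
  \sum_(p <- s) (if p.2 == t then p.1 else 0).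

Definition fmul (T : Type) (m : T -> T -> fsum T) (s t : fsum T) : fsum T :=
  flatten (flatten [seq [seq [seq (p.1 * q.1 * r.1, r.2) | r <- m p.2 q.2]
                            | q <- t] | p <- s]).

Definition fexp (T : Type) (m : T -> T -> fsum T) (one s : fsum T) (e : nat) :=
  iter e (fmul m s) one.

Definition tens (T U : Type) (s : fsum T) (t : fsum U) : fsum (T * U) :=
  flatten [seq [seq (p.1 * q.1, (p.2, q.2)) | q <- t] | p <- s].

(* c * x^a * g^J * y^L written in the PBW basis, using
   g^n = x^w, y^n = 1 - x^w (central), for arbitrary J L : nat. *)
Definition monH (c : K) (a : int) (J L : nat) : fsum Bidx :=
  [seq (c * (-1) ^+ i * ('C(L %/ n, i))%:R,
        (a + ((w * (J %/ n))%N)%:Z + ((w * i)%N)%:Z, (J %% n)%N, (L %% n)%N))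
  | i <- iota 0 (L %/ n).+1].

(* product of basis elements: x^a g^j y^l * x^a' g^j' y^l'
   = gam^(l j') x^(a+a') g^(j+j') y^(l+l')  (since y g = gam g y) *)
Definition mulB (b b' : Bidx) : fsum Bidx :=
  let: (a, j, l) := b in let: (a', j', l') := b' in
  monH (gam ^+ (l * j')) (a + a') (j + j') (l + l').

Definition mulB2 (b b' : Bidx * Bidx) : fsum (Bidx * Bidx) :=
  tens (mulB b.1 b'.1) (mulB b.2 b'.2).

Definition mulB3 (b b' : Bidx * Bidx * Bidx) : fsum (Bidx * Bidx * Bidx) :=
  tens (mulB2 b.1 b'.1) (mulB b.2 b'.2).

Definition oneH : fsum Bidx := [:: (1, (0%:Z, 0%N, 0%N))].
Definition xH (a : int) : fsum Bidx := [:: (1, (a, 0%N, 0%N))].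
Definition gH : fsum Bidx := monH 1 0 1 0.
Definition yH : fsum Bidx := monH 1 0 0 1.
Definition one2 := tens oneH oneH.
Definition one3 := tens one2 oneH.

(* Delta (x^a g^j y^l) = Delta(x)^a Delta(g)^j Delta(y)^l,
   Delta(x) = x(x)x, Delta(g) = g(x)g, Delta(y) = y(x)g + 1(x)y *)
Definition DeltaB (b : Bidx) : fsum (Bidx * Bidx) :=
  let: (a, j, l) := b in
  fmul mulB2 (fmul mulB2 (tens (xH a) (xH a)) (fexp mulB2 one2 (tens gH gH) j))
       (fexp mulB2 one2 (tens yH gH ++ tens oneH yH) l).

Definition Delta2B (b : Bidx) : fsum (Bidx * Bidx * Bidx) :=
  let: (a, j, l) := b in
  fmul mulB3 (fmul mulB3 (tens (tens (xH a) (xH a)) (xH a))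
                         (fexp mulB3 one3 (tens (tens gH gH) gH) j))
       (fexp mulB3 one3 (tens (tens yH gH) gH ++ tens (tens oneH yH) gH
                         ++ tens (tens oneH oneH) yH) l).

(* antipode: S(x^a g^j y^l) = S(y)^l S(g)^j S(x)^a with
   S(x) = x^-1, S(g) = g^-1 = g^(n-1) x^(-w), S(y) = - y g^-1 *)
Definition ginvH : fsum Bidx := monH 1 (- (w%:Z)) n.-1 0.
Definition SyH : fsum Bidx := [seq (- p.1, p.2) | p <- fmul mulB yH ginvH].
Definition SB (b : Bidx) : fsum Bidx :=
  let: (a, j, l) := b in
  fmul mulB (fmul mulB (fexp mulB oneH SyH l) (fexp mulB oneH ginvH j)) (xH (- a)).

Definition counitB (b : Bidx) : K := if b.2 == 0%N then 1 else 0.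

Definition normB (b : Bidx) : bool := (b.1.2 < n)%N && (b.2 < n)%N.

(* A finite-dimensional (left-left) Yetter-Drinfeld module over H on V:
   - the H-module structure is given by the actions of the generators
     x, x^-1, g, y satisfying the defining relations of H;
   - the comodule structure delta(v) = sum_b b (x) D b v, with D finitely
     supported on the list S of PBW basis indices. *)
Record YDmod (V : vectType K) := {
  ydX : 'End(V); ydXi : 'End(V); ydG : 'End(V); ydY : 'End(V);
  ydD : Bidx -> 'End(V);
  ydS : seq Bidx;
  yd_XXi : forall v, ydX (ydXi v) = v;
  yd_XiX : forall v, ydXi (ydX v) = v;
  yd_XG : forall v, ydX (ydG v) = ydG (ydX v);
  yd_XY : forall v, ydX (ydY v) = ydY (ydX v);
  yd_YG : forall v, ydY (ydG v) = gam *: ydG (ydY v);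
  yd_Yn : forall v, iter n ydY v = v - iter w ydX v;
  yd_Gn : forall v, iter w ydX v = iter n ydG v;
  yd_Suniq : uniq ydS;
  yd_Snorm : all normB ydS;
  yd_Dsupp : forall b v, b \notin ydS -> ydD b v = 0;
  yd_counit : forall v, \sum_(b <- ydS) counitB b *: ydD b v = v;
  (* coassociativity: (Delta (x) id) delta = (id (x) delta) delta *)
  yd_coassoc : forall b1 b2 v,
    \sum_(b <- ydS) fcoef (DeltaB b) (b1, b2) *: ydD b v = ydD b2 (ydD b1 v)
}.

Section Action.
Variables (V : vectType K) (M : YDmod V).

Definition xpow (a : int) (v : V) : V :=
  match a with
  | Posz m => iter m (ydX M) v
  | Negz m => iter m.+1 (ydXi M) v
  end.

Definition actB (b : Bidx) (v : V) : V :=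
  let: (a, j, l) := b in xpow a (iter j (ydG M) (iter l (ydY M) v)).

Definition fcoefV (s : seq (Bidx * V)) (c : Bidx) : V :=
  \sum_(q <- s) (if q.1 == c then q.2 else 0).

(* h_(1) v_(-1) S(h_(3)) (x) h_(2) . v_(0), for h the basis element b *)
Definition ydRHS (b : Bidx) (v : V) : seq (Bidx * V) :=
  flatten (flatten
    [seq [seq [seq (r.2, (p.1 * r.1) *: actB p.2.1.2 (ydD M b' v))
              | r <- fmul mulB (fmul mulB [:: (1, p.2.1.1)] [:: (1, b')]) (SB p.2.2)]
         | b' <- ydS M] | p <- Delta2B b]).

(* Yetter-Drinfeld compatibility, for all h in the PBW basis (hence, by
   linearity, for all h in H). *)
Definition YDcompat : Prop :=
  forall b v, normB b -> forall c, ydD M c (actB b v) = fcoefV (ydRHS b v) c.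

Definition YDsub (U : {vspace V}) : Prop :=
  forall u, u \in U ->
    [/\ ydX M u \in U, ydXi M u \in U, ydG M u \in U, ydY M u \in U
      & forall b, ydD M b u \in U].

Definition simpleYD : Prop :=
  YDcompat /\ (0 < \dim (fullv : {vspace V}))%N /\
  forall U : {vspace V}, YDsub U -> U = 0%VS \/ U = fullv.

Definition standard (al be : K) (r i : int) (v : V) : Prop :=
  let h : Bidx := (r + divz i n%:Z * w%:Z, absz (modz i n%:Z), 0%N) in
  [/\ v != 0, ydX M v = al *: v, ydG M v = be *: v
    & forall b, ydD M b v = if b == h then v else 0].

End Action.

Definition isoYD (V W : vectType K) (MV : YDmod V) (MW : YDmod W) : Prop :=
  exists f : 'Hom(V, W),
    bijective f /\
    [/\ forall v, f (ydX MV v) = ydX MW (f v),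
        forall v, f (ydXi MV v) = ydXi MW (f v),
        forall v, f (ydG MV v) = ydG MW (f v),
        forall v, f (ydY MV v) = ydY MW (f v)
      & forall b v, f (ydD MV b v) = ydD MW b (f v)].

End HopfB.

(* Every simple Yetter-Drinfeld module contains a standard element: take a
   coefficient of the coaction of maximal y-degree; by coassociativity and
   additivity of the y-degree under Delta it yields a nonzero z with
   delta(z) = h (x) z for a grouplike h = x^a g^j.  The space of such z is
   stable under the commuting operators x and g (conjugation by x and g fixes
   h), so over an algebraically closed field it contains a common eigenvector.
   Isomorphisms carry standard elements to standard elements.

   Conversely, let v in V and u in W be standard of the same type.  The action
   and coaction on y^l v are given by formulas that depend only on the type, so
   the span T of the pairs (y^l v, y^l u), l < n, is a Yetter-Drinfeld submodule
   of V x W.  On y^l v the element g acts by gam^-l be, and these scalars are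
   distinct, so averaging over the powers of g projects T onto the line through
   (v, u); hence T contains neither (v, 0) nor (0, u).  By simplicity the
   projections of T are onto and its slices are zero: T is the graph of an
   isomorphism V -> W. *)

From HB Require Import structures.
From mathcomp Require Import all_boot all_order all_algebra zify.
Set Implicit Arguments. Unset Strict Implicit. Unset Printing Implicit Defensive.
Import GRing.Theory.
Local Open Scope ring_scope.

Section FormalSums.
Variable K : fieldType.

Lemma fcoef_cons (T : eqType) (p : K * T) s t :
  fcoef (p :: s) t = (if p.2 == t then p.1 else 0) + fcoef s t.
Proof. by rewrite /fcoef big_cons. Qed.

Lemma fcoef1 (T : eqType) (k : K) (b t : T) :
  fcoef [:: (k, b)] t = if b == t then k else 0.
Proof. by rewrite /fcoef big_seq1. Qed.

Lemma fcoef_neq0 (T : eqType) (s : fsum K T) t :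
  fcoef s t != 0 -> exists2 p, p \in s & p.2 = t.
Proof.
elim: s => [|p s IH]; first by rewrite /fcoef big_nil eqxx.
rewrite fcoef_cons; case: (p.2 =P t) => [<- _|_]; first by exists p; rewrite ?mem_head.
by rewrite add0r => /IH [q qs <-]; exists q; rewrite // in_cons qs orbT.
Qed.

Lemma fmul1 (T : Type) (m : T -> T -> fsum K T) k b k' b' :
  fmul m [:: (k, b)] [:: (k', b')] = [seq (k * k' * r.1, r.2) | r <- m b b'].
Proof. by rewrite /fmul /= !cats0. Qed.

Lemma tens1 (T U : Type) (k : K) (b : T) k' (b' : U) :
  tens [:: (k, b)] [:: (k', b')] = [:: (k * k', (b, b'))].
Proof. by []. Qed.

Lemma mem_tens (T U : eqType) (s : fsum K T) (t : fsum K U) r :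
  r \in tens s t -> exists p q, [/\ p \in s, q \in t & r.2 = (p.2, q.2)].
Proof. by move=> /flattenP [l /mapP [p ps ->] /mapP [q qt ->]]; exists p, q. Qed.

Lemma mem_fmul (T : eqType) (m : T -> T -> fsum K T) s t r :
  r \in fmul m s t ->
  exists p q r', [/\ p \in s, q \in t, r' \in m p.2 q.2 & r.2 = r'.2].
Proof.
move=> /flattenP [l1 /flattenP [l2 /mapP [p ps ->] /mapP [q qt ->]] /mapP [r' r'm ->]].
by exists p, q, r'.
Qed.

Lemma mem_fexp_ind (T : eqType) (m : T -> T -> fsum K T) (one s : fsum K T) e
    (P : nat -> T -> Prop) :
  (forall r, r \in one -> P 0%N r.2) ->
  (forall k (p q r : K * T), (k < e)%N -> p \in s -> P k q.2 -> r \in m p.2 q.2 -> P k.+1 r.2) ->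
  forall r, r \in fexp m one s e -> P e r.2.
Proof.
move=> P0 PS; suff: forall k, (k <= e)%N -> forall r, r \in iter k (fmul m s) one -> P k r.2.
  exact.
elim=> [|k IH] ke r /=; first exact: P0.
case/mem_fmul=> p [q [r' [ps qi r'm ->]]]; exact: PS ke ps (IH (ltnW ke) q qi) r'm.
Qed.

End FormalSums.

Section PBWCalculus.
Variables (K : fieldType) (n w : nat) (gam : K).
Hypothesis n_gt0 : (0 < n)%N.

Local Notation mulB := (mulB n w gam).

Lemma monH_small (c : K) a J L : (L < n)%N ->
  monH n w c a J L = [:: (c, (a + (w * (J %/ n))%N%:Z, (J %% n)%N, L))].
Proof.
by move=> Ln; rewrite /monH divn_small //= expr0 mulr1 muln0 addr0 (modn_small Ln) mulr1.
Qed.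

Lemma monH_normal (c : K) a J L : (J < n)%N -> (L < n)%N ->
  monH n w c a J L = [:: (c, (a, J, L))].
Proof. by move=> Jn Ln; rewrite monH_small // divn_small // muln0 addr0 modn_small. Qed.

Lemma mulB_small a j l a' j' l' : (l + l' < n)%N ->
  mulB (a, j, l) (a', j', l') =
  [:: (gam ^+ (l * j'),
       (a + a' + (w * ((j + j') %/ n))%N%:Z, ((j + j') %% n)%N, (l + l')%N))].
Proof. exact: monH_small. Qed.

Lemma mulB_normal a j l a' j' l' : (j + j' < n)%N -> (l + l' < n)%N ->
  mulB (a, j, l) (a', j', l') = [:: (gam ^+ (l * j'), (a + a', (j + j')%N, (l + l')%N))].
Proof. exact: monH_normal. Qed.

Lemma mem_monH_ydeg (c : K) a J L r : r \in monH n w c a J L -> r.2.2 = (L %% n)%N.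
Proof. by case/mapP=> i _ ->. Qed.

Lemma mem_mulB_ydeg b b' r : r \in mulB b b' -> r.2.2 = ((b.2 + b'.2) %% n)%N.
Proof. by case: b => [[a j] l]; case: b' => [[a' j'] l']; apply: mem_monH_ydeg. Qed.

Lemma mem_Dgpow_ydeg j r :
  r \in fexp (mulB2 n w gam) (one2 K) (tens (gH K n w) (gH K n w)) j ->
  r.2.1.2 = 0%N /\ r.2.2.2 = 0%N.
Proof.
apply: (mem_fexp_ind (P := fun _ b => b.1.2 = 0%N /\ b.2.2 = 0%N)).
  by move=> r'; rewrite inE => /eqP ->.
move=> k p q r' _ /mem_tens [g1 [g2 [g1in g2in ->]]] [q1 q2].
rewrite /mulB2 => /mem_tens [c [d [cin din ->]]].
by rewrite (mem_mulB_ydeg cin) (mem_mulB_ydeg din) /= (mem_monH_ydeg g1in)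
  (mem_monH_ydeg g2in) q1 q2 !mod0n.
Qed.

Lemma mem_Dypow_ydeg l r : (l < n)%N ->
  r \in fexp (mulB2 n w gam) (one2 K)
          (tens (yH K n w) (gH K n w) ++ tens (oneH K) (yH K n w)) l ->
  (r.2.1.2 + r.2.2.2)%N = l.
Proof.
move=> ln; apply: (mem_fexp_ind (P := fun k b => (b.1.2 + b.2.2)%N = k)).
  by move=> r'; rewrite inE => /eqP ->.
move=> k p q r' kl pin /= qdeg; rewrite /mulB2 => /mem_tens [c [d [cin din ->]]].
rewrite (mem_mulB_ydeg cin) (mem_mulB_ydeg din) /=.
have n_gt1 : (1 < n)%N by lia.
have ydeg_p : (p.2.1.2 + p.2.2.2 = 1)%N.
  move: pin; rewrite mem_cat => /orP [] /mem_tens [g1 [g2 [g1in g2in ->]]] /=.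
    by rewrite (mem_monH_ydeg g1in) (mem_monH_ydeg g2in) mod0n addn0 modn_small.
  by move: g1in (mem_monH_ydeg g2in); rewrite inE => /eqP -> /= ->; rewrite modn_small.
(* [set] identifies projections that differ only in their implicit types,
   which [lia] would otherwise treat as distinct atoms. *)
move: ydeg_p qdeg; set p1 := p.2.1.2; set p2 := p.2.2.2; set q1 := q.2.1.2; set q2 := q.2.2.2.
by move=> ? ?; rewrite !modn_small; lia.
Qed.

Lemma DeltaB_ydeg c b1 b2 : normB n c -> fcoef (DeltaB n w gam c) (b1, b2) != 0 ->
  (b1.2 + b2.2)%N = c.2.
Proof.
case: c => [[a j] l] /andP [_ /= ln] /fcoef_neq0 [r + rE] /=.
have [-> ->] : b1 = r.2.1 /\ b2 = r.2.2 by rewrite rE.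
case/mem_fmul=> p [q [r' [pin qin + ->]]]; rewrite /mulB2 => /mem_tens [c [d [cin din ->]]] /=.
rewrite (mem_mulB_ydeg cin) (mem_mulB_ydeg din).
case/mem_fmul: pin => p' [q' [r'' [+ /mem_Dgpow_ydeg [g1 g2] + ->]]].
rewrite inE => /eqP -> /=; rewrite /mulB2 => /mem_tens [e [f [ein fin ->]]] /=.
rewrite (mem_mulB_ydeg ein) (mem_mulB_ydeg fin) /= g1 g2 mod0n !add0n.
move: (mem_Dypow_ydeg ln qin); set q1 := q.2.1.2; set q2 := q.2.2.2.
by move=> ?; rewrite !modn_small; lia.
Qed.

Lemma mulB2E b1 b2 b1' b2' :
  mulB2 n w gam (b1, b2) (b1', b2') = tens (mulB b1 b1') (mulB b2 b2').
Proof. by []. Qed.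

Lemma mulB3E b1 b2 b3 b1' b2' b3' : mulB3 n w gam (b1, b2, b3) (b1', b2', b3') =
  tens (tens (mulB b1 b1') (mulB b2 b2')) (mulB b3 b3').
Proof. by []. Qed.

Lemma Dgpow_normal j : (j < n)%N ->
  fexp (mulB2 n w gam) (one2 K) (tens (gH K n w) (gH K n w)) j =
  [:: (1, ((0%:Z, j, 0%N), (0%:Z, j, 0%N)))].
Proof.
elim: j => [|j IH] jn; first by rewrite /= /one2 /oneH tens1 mulr1.
rewrite /fexp /= -/(fexp _ _ _ j) IH 1?ltnW // /gH monH_normal //; last by lia.
rewrite tens1 fmul1 mulB2E !mulB_normal ?add0n //.
by rewrite tens1 /= !mul0n !expr0 !mulr1 addr0.
Qed.

Lemma D2gpow_normal j : (j < n)%N ->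
  fexp (mulB3 n w gam) (one3 K) (tens (tens (gH K n w) (gH K n w)) (gH K n w)) j =
  [:: (1, (((0%:Z, j, 0%N), (0%:Z, j, 0%N)), (0%:Z, j, 0%N)))].
Proof.
elim: j => [|j IH] jn; first by rewrite /= /one3 /one2 /oneH !tens1 !mulr1.
rewrite /fexp /= -/(fexp _ _ _ j) IH 1?ltnW // /gH monH_normal //; last by lia.
rewrite !tens1 fmul1 mulB3E !mulB_normal ?add0n //.
by rewrite !tens1 /= !mul0n !expr0 !mulr1 addr0.
Qed.

Lemma DeltaB_grouplike a j : (j < n)%N ->
  DeltaB n w gam (a, j, 0%N) = [:: (1, ((a, j, 0%N), (a, j, 0%N)))].
Proof.
move=> jn; rewrite /DeltaB Dgpow_normal // /xH tens1 fmul1 mulB2E.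
rewrite !mulB_normal ?add0n ?addn0 // tens1 /= /one2 /oneH tens1 fmul1 mulB2E.
rewrite !mulB_normal ?add0n ?addn0 // tens1 /=.
by rewrite !muln0 !mul0n !expr0 !mulr1 !addr0.
Qed.

Lemma Delta2B_grouplike a j : (j < n)%N ->
  Delta2B n w gam (a, j, 0%N) = [:: (1, (((a, j, 0%N), (a, j, 0%N)), (a, j, 0%N)))].
Proof.
move=> jn; rewrite /Delta2B D2gpow_normal // /xH !tens1 fmul1 mulB3E.
rewrite !mulB_normal ?add0n ?addn0 // !tens1 /= /one3 /one2 /oneH !tens1 fmul1 mulB3E.
rewrite !mulB_normal ?add0n ?addn0 // !tens1 /=.
by rewrite !muln0 !mul0n !expr0 !mulr1 !addr0.
Qed.

Lemma SB_x a : SB n w gam (a, 0%N, 0%N) = [:: (1, (- a, 0%N, 0%N))].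
Proof.
rewrite /SB /= /oneH /xH fmul1 !mulB_normal //= fmul1 !mulB_normal //=.
by rewrite !muln0 !expr0 !mulr1 !add0r.
Qed.

Lemma SB_g : (1 < n)%N -> SB n w gam (0, 1%N, 0%N) = [:: (1, (- (w%:Z), n.-1, 0%N))].
Proof.
move=> n_gt1; rewrite /SB /= /ginvH monH_normal //; last by lia.
rewrite /oneH /xH fmul1 mulB_normal ?addn0; try lia.
rewrite fmul1 mulB_normal ?add0n ?addn0; try lia.
rewrite fmul1 mulB_normal ?add0n ?addn0; try lia.
by rewrite /= !muln0 !mul0n !expr0 !mulr1 !addr0 !add0r.
Qed.

(* b1 b S(b3), the shape of h_(1) v_(-1) S(h_(3)) in [ydRHS]. *)
Definition conjB (b1 b b3 : Bidx) : fsum K Bidx :=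
  fmul mulB (fmul mulB [:: (1, b1)] [:: (1, b)]) (SB n w gam b3).

Lemma conjB_x a' j' l' : (j' < n)%N -> (l' < n)%N ->
  conjB (1%:Z, 0%N, 0%N) (a', j', l') (1%:Z, 0%N, 0%N) = [:: (1, (a', j', l'))].
Proof.
move=> jn ln; rewrite /conjB SB_x fmul1 mulB_normal ?add0n //= fmul1 mulB_normal ?addn0 //=.
by rewrite !muln0 !mul0n !expr0 !mulr1 addrC addKr.
Qed.

Lemma conjB_g a' j' l' : (1 < n)%N -> (j' < n)%N -> (l' < n)%N ->
  conjB (0, 1%N, 0%N) (a', j', l') (0, 1%N, 0%N) = [:: (gam ^+ (l' * n.-1), (a', j', l'))].
Proof.
move=> n_gt1 jn ln; rewrite /conjB SB_g // fmul1 mulB_small ?add0n // fmul1 mulB_small ?addn0 //.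
have [-> carry] : ((j'.+1 %% n + n.-1) %% n = j')%N /\
                  (j'.+1 %/ n + (j'.+1 %% n + n.-1) %/ n = 1)%N.
  case: (ltngtP j'.+1 n) => [jlt|jgt|jeq].
  - rewrite (modn_small jlt) (divn_small jlt) add0n.
    have -> : (j'.+1 + n.-1 = 1 * n + j')%N by lia.
    by rewrite modnMDl divnMDl // modn_small // divn_small.
  - by lia.
  - by rewrite jeq modnn divnn n_gt0 add0n modn_small ?divn_small //; lia.
rewrite /= add1n mul0n expr0 !mul1r; congr [:: (_, (_, _, _))].
rewrite add0r -[RHS]addr0 -!addrA; congr (_ + _).
by rewrite addrCA -PoszD -mulnDr carry muln1 addNr.
Qed.

End PBWCalculus.

Lemma big_uniq_if_eq (I : eqType) (R : nmodType) (r : seq I) (F : I -> R) c :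
  uniq r -> \sum_(i <- r) (if i == c then F i else 0) = if c \in r then F c else 0.
Proof.
move=> r_uniq; case: ifP => cr.
  by rewrite (bigD1_seq c) //= eqxx big1 ?addr0 // => i /negbTE ->.
by rewrite big1_seq // => i /andP [_ ir]; case: eqP => // ic; rewrite -ic ir in cr.
Qed.

Lemma iter_eigen (K : fieldType) (V : vectType K) (f : 'End(V)) (a : K) v k :
  f v = a *: v -> iter k f v = a ^+ k *: v.
Proof.
move=> fv; elim: k => [|k IH]; first by rewrite expr0 scale1r.
by rewrite iterS IH linearZ /= fv scalerA exprS mulrC.
Qed.

Lemma memv_bigcap_seq (K : fieldType) (V : vectType K) (I : Type) (r : seq I)
    (F : I -> {vspace V}) v :
  (v \in \bigcap_(i <- r) F i)%VS = all (fun i => v \in F i) r.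
Proof. by elim: r => [|i r IH]; rewrite ?big_nil ?memvf // big_cons memv_cap IH. Qed.

Lemma exists_eigenvector (K : closedFieldType) (V : vectType K) (f : 'End(V)) :
  (0 < \dim {:V})%N -> exists a (v : V), v != 0 /\ f v = a *: v.
Proof.
move=> dimV; pose A := passmx.mxof (vbasis fullv) (vbasis fullv) f.
have /closed_rootP [a] : size (char_poly A) != 1%N by rewrite size_char_poly -lt0n.
rewrite -eigenvalue_root_char /eigenvalue -(passmx.vsof_eq0 (vbasisP fullv)).
rewrite -passmx.leigenspaceE ?vbasisP // => fa.
exists a, (vpick (passmx.leigenspace f a)); rewrite vpick0 fa; split=> //.
have := memv_pick (passmx.leigenspace f a).
by rewrite memv_ker add_lfunE opp_lfunE scale_lfunE id_lfunE subr_eq0 => /eqP.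
Qed.

Lemma exists_eigenvector_in (K : closedFieldType) (V : vectType K) (f : 'End(V))
    (U : {vspace V}) :
  U != 0%VS -> {in U, forall u, f u \in U} ->
  exists a (v : V), [/\ v \in U, v != 0 & f v = a *: v].
Proof.
move=> U_neq0 fU; pose g : 'End(subvs_of U) := (linfun (vsproj U) \o f \o linfun vsval)%VF.
have [|a [x [x_neq0 gx]]] := exists_eigenvector g.
  by rewrite dimvf /= lt0n dimv_eq0.
exists a, (vsval x); split; first exact: subvsP.
  by apply: contra x_neq0 => /eqP x0; apply/eqP/subvs_inj; rewrite x0 linear0.
by have := congr1 vsval gx; rewrite !comp_lfunE !lfunE /= vsprojK ?fU ?subvsP.
Qed.

Lemma sum_expr_unity_root (R : idomainType) n (z : R) :
  z ^+ n = 1 -> z != 1 -> \sum_(k < n) z ^+ k = 0.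
Proof.
move=> zn z_neq1; have : (z - 1) * \sum_(k < n) z ^+ k = 0 by rewrite -subrX1 zn subrr.
by move/eqP; rewrite mulf_eq0 subr_eq0 (negbTE z_neq1) => /eqP.
Qed.

Section ProductSubspaces.
Variables (K : fieldType) (V W : vectType K).
Implicit Types (T : {vspace (V * W)%type}) (f : 'End(V)) (g : 'End(W)).

Definition pair_stable T (f : V -> V) (g : W -> W) : Prop :=
  forall a b, (a, b) \in T -> (f a, g b) \in T.

Lemma pair_stable_iter T (f : V -> V) (g : W -> W) k :
  pair_stable T f g -> pair_stable T (iter k f) (iter k g).
Proof. by move=> fgT a b abT; elim: k => //= k; apply: fgT. Qed.

Section PairMap.
Variables (f : 'End(V)) (g : 'End(W)).
Definition pair_map (t : V * W) : V * W := (f t.1, g t.2).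
Fact pair_map_is_linear : linear pair_map.
Proof. by move=> k x y; rewrite /pair_map /= !linearP. Qed.
HB.instance Definition _ := GRing.isLinear.Build _ _ _ _ pair_map pair_map_is_linear.
End PairMap.

Lemma pair_map_span (X : seq (V * W)) (U : {vspace (V * W)%type}) f g :
  {in X, forall x, (f x.1, g x.2) \in U} ->
  forall a b, (a, b) \in <<X>>%VS -> (f a, g b) \in U.
Proof.
move=> fgX a b abX; pose fg : 'End((V * W)%type) := linfun (pair_map f g).
have: (fg @: <<X>> <= U)%VS.
  by rewrite limg_span; apply/span_subvP => _ /mapP [x xX ->]; rewrite lfunE fgX.
by move/subvP; apply; have := memv_img fg abX; rewrite lfunE.
Qed.

Lemma memv_pairZ T k a b : (a, b) \in T -> (k *: a, k *: b) \in T.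
Proof. exact: memvZ. Qed.

Lemma memv_line_pair a b x y :
  ((x, y) \in <[(a, b) : V * W]>)%VS -> a != 0 -> b != 0 -> (x == 0) = (y == 0).
Proof.
move=> /vlineP [k [-> ->]] a_neq0 b_neq0.
by rewrite !scaler_eq0 (negbTE a_neq0) (negbTE b_neq0).
Qed.

Definition fstL : 'Hom((V * W)%type, V) := linfun (@fst V W).
Definition sndL : 'Hom((V * W)%type, W) := linfun (@snd V W).

Definition fst_image T : {vspace V} := (fstL @: T)%VS.
Definition snd_image T : {vspace W} := (sndL @: T)%VS.
Definition fst_slice T : {vspace V} := (fstL @: (T :&: lker sndL))%VS.
Definition snd_slice T : {vspace W} := (sndL @: (T :&: lker fstL))%VS.

Lemma fst_imageP T a : reflect (exists b, (a, b) \in T) (a \in fst_image T).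
Proof.
apply: (iffP memv_imgP) => [[t tT ->]|[b abT]]; last by exists (a, b); rewrite ?lfunE.
by exists t.2; rewrite lfunE -surjective_pairing.
Qed.

Lemma snd_imageP T b : reflect (exists a, (a, b) \in T) (b \in snd_image T).
Proof.
apply: (iffP memv_imgP) => [[t tT ->]|[a abT]]; last by exists (a, b); rewrite ?lfunE.
by exists t.1; rewrite lfunE -surjective_pairing.
Qed.

Lemma mem_fst_slice T a : (a \in fst_slice T) = ((a, 0) \in T).
Proof.
apply/memv_imgP/idP => [[t /memv_capP [tT]]|aT]; last first.
  by exists (a, 0); rewrite ?lfunE // memv_cap aT memv_ker lfunE /= eqxx.
by rewrite memv_ker lfunE => /eqP t2 ->; rewrite lfunE -t2 -surjective_pairing.
Qed.

Lemma mem_snd_slice T b : (b \in snd_slice T) = ((0, b) \in T).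
Proof.
apply/memv_imgP/idP => [[t /memv_capP [tT]]|bT]; last first.
  by exists (0, b); rewrite ?lfunE // memv_cap bT memv_ker lfunE /= eqxx.
by rewrite memv_ker lfunE => /eqP t1 ->; rewrite lfunE -t1 -surjective_pairing.
Qed.

Lemma fst_image_stable T f g :
  pair_stable T f g -> {in fst_image T, forall a, f a \in fst_image T}.
Proof. by move=> fgT a /fst_imageP [b /fgT abT]; apply/fst_imageP; exists (g b). Qed.

Lemma snd_image_stable T f g :
  pair_stable T f g -> {in snd_image T, forall b, g b \in snd_image T}.
Proof. by move=> fgT b /snd_imageP [a /fgT abT]; apply/snd_imageP; exists (f a). Qed.

Lemma fst_slice_stable T f g :
  pair_stable T f g -> {in fst_slice T, forall a, f a \in fst_slice T}.
Proof. by move=> fgT a; rewrite !mem_fst_slice => /fgT; rewrite linear0. Qed.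

Lemma snd_slice_stable T f g :
  pair_stable T f g -> {in snd_slice T, forall b, g b \in snd_slice T}.
Proof. by move=> fgT b; rewrite !mem_snd_slice => /fgT; rewrite linear0. Qed.

Lemma graph_bijection T :
  fst_image T = fullv -> snd_image T = fullv -> fst_slice T = 0%VS -> snd_slice T = 0%VS ->
  exists2 f : 'Hom(V, W), bijective f & forall a b, ((a, b) \in T) = (b == f a).
Proof.
move=> fstT sndT fst0 snd0; pose p : 'Hom((V * W)%type, V) := (fstL \o projv T)%VF.
have p_onto a : a \in limg p.
  have /fst_imageP [b abT] : a \in fst_image T by rewrite fstT memvf.
  by apply/memv_imgP; exists (a, b); rewrite ?memvf // comp_lfunE projv_id // lfunE.
pose f : 'Hom(V, W) := (sndL \o projv T \o p^-1)%VF.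
have graph_f a : (a, f a) \in T.
  have -> : f a = (projv T (p^-1%VF a)).2 by rewrite !comp_lfunE lfunE.
  have {1}<- : (projv T (p^-1%VF a)).1 = a.
    by rewrite -[RHS](limg_lfunVK (p_onto a)) comp_lfunE lfunE.
  by rewrite -surjective_pairing memv_proj.
have graphE a b : ((a, b) \in T) = (b == f a).
  apply/idP/eqP => [abT|->] //; apply/eqP; rewrite -subr_eq0 -memv0 -snd0 mem_snd_slice.
  by rewrite -(subrr a); apply: (memvB abT (graph_f a)).
exists f => //; exists f^-1%VF => [a|b].
  apply: lker0_lfunK; apply/lker0P => a1 a2 fa12; apply/eqP; rewrite -subr_eq0.
  rewrite -memv0 -fst0 mem_fst_slice -(subrr (f a2)) -{1}fa12.
  exact: (memvB (graph_f a1) (graph_f a2)).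
apply: limg_lfunVK; have /snd_imageP [a abT] : b \in snd_image T by rewrite sndT memvf.
by rewrite graphE in abT; apply/memv_imgP; exists a; rewrite ?memvf // (eqP abT).
Qed.

Lemma graph_intertwine T (f : 'Hom(V, W)) (fV : V -> V) (fW : W -> W) :
  (forall a b, ((a, b) \in T) = (b == f a)) -> pair_stable T fV fW ->
  forall a, f (fV a) = fW (f a).
Proof.
by move=> graphE fgT a; apply/esym/eqP; rewrite -graphE fgT // graphE.
Qed.

End ProductSubspaces.

Section YDModule.
Variables (K : fieldType) (n w : nat) (gam : K) (V : vectType K).
Variable M : YDmod n w gam V.
Hypothesis n_gt0 : (0 < n)%N.

Local Notation S := (ydS M).
Local Notation D := (ydD M).
Local Notation X := (ydX M).
Local Notation G := (ydG M).

Definition grouplike_coaction (h : Bidx) (v : V) : Prop :=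
  forall b, D b v = if b == h then v else 0.

Lemma mem_supp_normB b : b \in S -> normB n b.
Proof. by move/(allP (yd_Snorm M)). Qed.

Lemma fcoefV1 b (x : V) c : fcoefV [:: (b, x)] c = if b == c then x else 0.
Proof. by rewrite /fcoefV big_seq1. Qed.

Lemma fcoefV_flatten (ss : seq (seq (Bidx * V))) c :
  fcoefV (flatten ss) c = \sum_(s <- ss) fcoefV s c.
Proof. by rewrite /fcoefV big_flatten. Qed.

Lemma ydRHS_grouplike b (k : Bidx -> K) v c :
  Delta2B n w gam b = [:: (1, ((b, b), b))] ->
  {in S, forall b', conjB n w gam b b' b = [:: (k b', b')]} ->
  fcoefV (ydRHS M b v) c = if c \in S then k c *: actB M b (D c v) else 0.
Proof.
move=> Db conj_b; rewrite /ydRHS Db /= cats0 fcoefV_flatten big_map.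
rewrite -(big_uniq_if_eq (fun b' => k b' *: actB M b (D b' v)) _ (yd_Suniq M)).
by apply: eq_big_seq => b' b'S /=; rewrite -/(conjB _ _ _ _ _ _) conj_b //= fcoefV1 mul1r.
Qed.

Lemma counit_ydeg0 v : v = \sum_(b <- S | b.2 == 0%N) D b v.
Proof.
rewrite [RHS]big_mkcond -{1}(yd_counit M v); apply: eq_bigr => b _.
by rewrite /counitB; case: ifP; rewrite ?scale1r ?scale0r.
Qed.

(* Take z = D c v != 0 with c of maximal y-degree: by coassociativity
   D b z is a combination of the D b' v with b'.2 = c.2 + b.2. *)
Lemma exists_coaction_ydeg0 : (0 < \dim (fullv : {vspace V}))%N ->
  exists2 z : V, z != 0 & forall b, (0 < b.2)%N -> D b z = 0.
Proof.
move=> dimV; pose P k := has (fun c => (D c != 0) && (c.2 == k)) S.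
have [k Pk] : exists k, P k.
  have v0_neq0 : vpick (fullv : {vspace V}) != 0 by rewrite vpick0 -dimv_eq0 -lt0n.
  have /hasP [c cS Dc] : has (fun c => D c != 0) S.
    apply/hasPn => D0; move/eqP: v0_neq0; apply.
    rewrite (counit_ydeg0 (vpick _)) big1_seq // => b /andP [_ bS].
    by move/negPn/eqP: (D0 b bS) => ->; rewrite zero_lfunE.
  by exists c.2; apply/hasP; exists c; rewrite ?Dc ?eqxx.
have P_le_n k' : P k' -> (k' <= n)%N.
  case/hasP=> c /mem_supp_normB /andP [_ cn] /andP [_ /eqP <-]; exact: ltnW.
case: (ex_maxnP (ex_intro _ k Pk) P_le_n) => L /hasP [c0 c0S /andP [Dc0 /eqP c0L]] Lmax.
case/lfunPn: Dc0 => v; rewrite zero_lfunE => Dc0v.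
exists (D c0 v) => // b' b'_gt0; rewrite -(yd_coassoc M) big1_seq // => b /andP [_ bS].
have [->|nz] := eqVneq (fcoef (DeltaB n w gam b) (c0, b')) 0; first by rewrite scale0r.
have [->|Db] := eqVneq (D b) 0; first by rewrite zero_lfunE scaler0.
have /Lmax : P b.2 by apply/hasP; exists b; rewrite ?Db ?eqxx.
rewrite -(DeltaB_ydeg n_gt0 (mem_supp_normB bS) nz) -c0L -{2}[c0.2]addn0 leq_add2l.
by rewrite leqNgt b'_gt0.
Qed.

Lemma exists_grouplike_coaction : (0 < \dim (fullv : {vspace V}))%N ->
  exists h (z : V), [/\ z != 0, h.2 = 0%N, h \in S & grouplike_coaction h z].
Proof.
case/exists_coaction_ydeg0=> z0 z0_neq0 Dz0.
have /hasP [h hS /andP [/eqP h2 Dhz0]] : has (fun b => (b.2 == 0%N) && (D b z0 != 0)) S.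
  apply/hasPn => D0; move/eqP: z0_neq0; apply.
  rewrite (counit_ydeg0 z0) big1_seq // => b /andP [b0 bS].
  by move: (D0 b bS); rewrite b0 /= negbK => /eqP.
exists h, (D h z0); split=> // b; rewrite -(yd_coassoc M).
transitivity (\sum_(c <- S) if c == h then (if b == h then D h z0 else 0) else 0);
  last by rewrite big_uniq_if_eq ?yd_Suniq // hS.
apply: eq_big_seq => c cS; have /andP [jn _] := mem_supp_normB cS.
have [c2_0|c2_gt0] := posnP c.2; last first.
  by rewrite Dz0 // scaler0; case: eqP => // ch; rewrite ch h2 in c2_gt0.
case: c c2_0 jn cS => [[a j] l] l0 jn _; rewrite /= in l0 jn; subst l.
rewrite DeltaB_grouplike // fcoef1 xpair_eqE.
case: ((a, j, 0%N) =P h) => [<-|_] /=; last by rewrite scale0r.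
by rewrite eq_sym; case: eqP; rewrite ?scale1r ?scale0r.
Qed.

Hypothesis compat : YDcompat M.

Lemma D_X c v : D c (X v) = X (D c v).
Proof.
have := @compat (1%:Z, 0%N, 0%N) v _ c; rewrite /normB /= n_gt0 => /(_ isT).
rewrite (@ydRHS_grouplike _ (fun _ => 1)) ?Delta2B_grouplike //; last first.
  by case=> [[a' j'] l'] /mem_supp_normB /andP [/= jn ln]; apply: conjB_x.
move=> ->; case: ifP => cS; first by rewrite scale1r.
by rewrite yd_Dsupp ?cS // linear0.
Qed.

Lemma D_G c v : (1 < n)%N -> D c (G v) = gam ^+ (c.2 * n.-1) *: G (D c v).
Proof.
move=> n_gt1; have := @compat (0, 1%N, 0%N) v _ c.
rewrite /normB /= n_gt0 n_gt1 => /(_ isT).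
rewrite (@ydRHS_grouplike _ (fun b => gam ^+ (b.2 * n.-1))) ?Delta2B_grouplike //; last first.
  by case=> [[a' j'] l'] /mem_supp_normB /andP [/= jn ln]; apply: conjB_g.
move=> ->; case: ifP => cS //.
by rewrite yd_Dsupp ?cS // !linear0.
Qed.

End YDModule.

Lemma actB0 (K : fieldType) (n w : nat) (gam : K) (V : vectType K)
    (M : YDmod n w gam V) q :
  actB M q 0 = 0.
Proof.
have iter0 k (f : 'End(V)) : iter k f 0 = 0 by elim: k => //= k ->; rewrite linear0.
by case: q => [[[m|m] j] l]; rewrite /actB /xpow !iter0.
Qed.

Section ExistsStandard.
Variables (K : closedFieldType) (n w : nat) (gam : K) (V : vectType K).
Variable M : YDmod n w gam V.
Hypotheses (n_gt0 : (0 < n)%N) (compat : YDcompat M).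

Local Notation S := (ydS M).
Local Notation D := (ydD M).
Local Notation X := (ydX M).
Local Notation G := (ydG M).

Definition coaction_space (h : Bidx) : {vspace V} :=
  (\bigcap_(b <- S) lker (D b - if b == h then \1%VF else 0%R))%VS.

Lemma coaction_spaceP h v :
  h \in S -> reflect (grouplike_coaction M h v) (v \in coaction_space h).
Proof.
have kerE b : (v \in lker (D b - if b == h then \1%VF else 0%R)) =
              (D b v == if b == h then v else 0).
  by rewrite memv_ker add_lfunE opp_lfunE subr_eq0; case: ifP; rewrite lfunE.
move=> hS; rewrite memv_bigcap_seq; apply: (iffP allP) => [Dv b|Dv b _]; last first.
  by rewrite kerE Dv.
case: (boolP (b \in S)) => [/Dv|bS]; first by rewrite kerE => /eqP.
by rewrite yd_Dsupp //; case: eqP => // bh; rewrite bh hS in bS.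
Qed.

Lemma coaction_space_stable h (f : 'End(V)) :
  h \in S -> (forall v, grouplike_coaction M h v -> grouplike_coaction M h (f v)) ->
  {in coaction_space h, forall v, f v \in coaction_space h}.
Proof. by move=> hS fh v /(coaction_spaceP _ hS) /fh /(coaction_spaceP _ hS). Qed.

Lemma grouplike_coaction_X h v : grouplike_coaction M h v -> grouplike_coaction M h (X v).
Proof. by move=> Dv b; rewrite D_X // Dv; case: ifP; rewrite ?linear0. Qed.

Lemma grouplike_coaction_G h v :
  h.2 = 0%N -> grouplike_coaction M h v -> grouplike_coaction M h (G v).
Proof.
move=> h2 Dv b; have [n_gt1|n_le1] := ltnP 1 n.
  rewrite D_G // Dv; case: eqP => [->|_]; last by rewrite linear0 scaler0.
  by rewrite h2 mul0n expr0 scale1r.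
have n1 : n = 1%N by apply/eqP; rewrite eqn_leq n_le1 n_gt0.
have iter1 k (f : V -> V) x : k = 1%N -> iter k f x = f x by move->.
rewrite -(iter1 n G v n1) -(yd_Gn M).
suff: forall k, grouplike_coaction M h (iter k X v) by apply.
by elim=> [|k IH] //=; apply: grouplike_coaction_X.
Qed.

Lemma exists_standard : (0 < \dim (fullv : {vspace V}))%N ->
  exists al be r i (v : V), [/\ al != 0, be != 0 & standard M al be r i v].
Proof.
case/(exists_grouplike_coaction M n_gt0)=> -[[a j] l] [z [z_neq0 /= l0 hS Dz]]; subst l.
set h := (a, j, 0%N) in hS Dz *.
have Vh_neq0 : coaction_space h != 0%VS.
  apply: contra z_neq0 => /eqP Vh0; rewrite -memv0 -Vh0.
  exact/coaction_spaceP.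
have XVh := coaction_space_stable hS (@grouplike_coaction_X h).
have GVh := coaction_space_stable hS (fun v => @grouplike_coaction_G h v erefl).
have [al [v1 [v1Vh v1_neq0 Xv1]]] := exists_eigenvector_in Vh_neq0 XVh.
pose E := (coaction_space h :&: lker (X - al *: \1%VF))%VS.
have memE v : (v \in E) = (v \in coaction_space h) && (X v == al *: v).
  by rewrite memv_cap memv_ker add_lfunE opp_lfunE scale_lfunE id_lfunE subr_eq0.
have E_neq0 : E != 0%VS.
  by apply: contra v1_neq0 => /eqP E0; have := memE v1; rewrite E0 memv0 v1Vh Xv1 eqxx.
have GE : {in E, forall v, G v \in E}.
  by move=> v; rewrite !memE => /andP [/GVh -> /eqP Xv]; rewrite (yd_XG M) Xv linearZ eqxx.
have [be [v [+ v_neq0 Gv]]] := exists_eigenvector_in E_neq0 GE.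
rewrite memE => /andP [/(coaction_spaceP _ hS) Dv /eqP Xv].
have al_neq0 : al != 0.
  by apply: contra v_neq0 => /eqP al0; rewrite -(yd_XiX M v) Xv al0 scale0r linear0.
have be_neq0 : be != 0.
  apply: contra v_neq0 => /eqP be0; have := yd_Gn M v.
  rewrite (iter_eigen w Xv) (iter_eigen n Gv) be0 expr0n eqn0Ngt n_gt0 scale0r.
  by move/eqP; rewrite scaler_eq0 expf_eq0 (negbTE al_neq0) andbF.
have /andP [/= jn _] := mem_supp_normB hS.
exists al, be, a, j%:Z, v; split=> //; split=> //.
by rewrite divz_small ?modz_small /= ?mul0r ?addr0 ?ltz_nat.
Qed.

End ExistsStandard.

Lemma standard_of_isoYD (K : fieldType) (n w : nat) (gam : K) (V W : vectType K)
    (MV : YDmod n w gam V) (MW : YDmod n w gam W) al be r i v :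
  isoYD MV MW -> standard MV al be r i v -> exists u, standard MW al be r i u.
Proof.
case=> f [[f' ff' f'f] [fX _ fG _ fD]] [v_neq0 Xv Gv Dv]; exists (f v); split.
- by apply: contra v_neq0 => /eqP fv0; apply/eqP/(can_inj ff'); rewrite fv0 linear0.
- by rewrite -fX Xv linearZ.
- by rewrite -fG Gv linearZ.
- by move=> b; rewrite -fD Dv; case: ifP; rewrite ?linear0.
Qed.

Section YDPairs.
Variables (K : fieldType) (n w : nat) (gam : K) (V W : vectType K).
Variables (MV : YDmod n w gam V) (MW : YDmod n w gam W).

Definition YDsub_pair (T : {vspace (V * W)%type}) : Prop :=
  [/\ pair_stable T (ydX MV) (ydX MW), pair_stable T (ydXi MV) (ydXi MW),
      pair_stable T (ydG MV) (ydG MW), pair_stable T (ydY MV) (ydY MW)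
    & forall c, pair_stable T (ydD MV c) (ydD MW c)].

Section Projections.
Variables (T : {vspace (V * W)%type}) (T_YD : YDsub_pair T).

Lemma YDsub_fst_image : YDsub MV (fst_image T).
Proof.
case: T_YD => sX sXi sG sY sD a aT.
by split=> [||||c];
  [exact: fst_image_stable sX _ aT | exact: fst_image_stable sXi _ aT
  | exact: fst_image_stable sG _ aT | exact: fst_image_stable sY _ aT
  | exact: fst_image_stable (sD c) _ aT].
Qed.

Lemma YDsub_snd_image : YDsub MW (snd_image T).
Proof.
case: T_YD => sX sXi sG sY sD b bT.
by split=> [||||c];
  [exact: snd_image_stable sX _ bT | exact: snd_image_stable sXi _ bT
  | exact: snd_image_stable sG _ bT | exact: snd_image_stable sY _ bT
  | exact: snd_image_stable (sD c) _ bT].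
Qed.

Lemma YDsub_fst_slice : YDsub MV (fst_slice T).
Proof.
case: T_YD => sX sXi sG sY sD a aT.
by split=> [||||c];
  [exact: fst_slice_stable sX _ aT | exact: fst_slice_stable sXi _ aT
  | exact: fst_slice_stable sG _ aT | exact: fst_slice_stable sY _ aT
  | exact: fst_slice_stable (sD c) _ aT].
Qed.

Lemma YDsub_snd_slice : YDsub MW (snd_slice T).
Proof.
case: T_YD => sX sXi sG sY sD b bT.
by split=> [||||c];
  [exact: snd_slice_stable sX _ bT | exact: snd_slice_stable sXi _ bT
  | exact: snd_slice_stable sG _ bT | exact: snd_slice_stable sY _ bT
  | exact: snd_slice_stable (sD c) _ bT].
Qed.

End Projections.

Lemma isoYD_of_YDsub_pair (T : {vspace (V * W)%type}) v u :
  simpleYD MV -> simpleYD MW -> YDsub_pair T ->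
  (v, u) \in T -> (v, 0) \notin T -> (0, u) \notin T -> isoYD MV MW.
Proof.
move=> [_ [_ simV]] [_ [_ simW]] T_YD vuT v0T u0T.
have v_neq0 : v != 0 by apply: contraNneq v0T => ->; apply: mem0v.
have u_neq0 : u != 0 by apply: contraNneq u0T => ->; apply: mem0v.
have fst_full : fst_image T = fullv.
  case: (simV _ (YDsub_fst_image T_YD)) => // fst0.
  have : v \in fst_image T by apply/fst_imageP; exists u.
  by rewrite fst0 memv0 (negbTE v_neq0).
have snd_full : snd_image T = fullv.
  case: (simW _ (YDsub_snd_image T_YD)) => // snd0.
  have : u \in snd_image T by apply/snd_imageP; exists v.
  by rewrite snd0 memv0 (negbTE u_neq0).
have fst0 : fst_slice T = 0%VS.
  case: (simV _ (YDsub_fst_slice T_YD)) => // fst_slice_full.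
  by move: v0T; rewrite -mem_fst_slice fst_slice_full memvf.
have snd0 : snd_slice T = 0%VS.
  case: (simW _ (YDsub_snd_slice T_YD)) => // snd_slice_full.
  by move: u0T; rewrite -mem_snd_slice snd_slice_full memvf.
have [f f_bij graphE] := graph_bijection fst_full snd_full fst0 snd0.
case: T_YD => sX sXi sG sY sD.
exists f; split=> //; split=> [||||c]; exact: graph_intertwine graphE _.
Qed.

End YDPairs.

Section StandardElement.
Variables (K : fieldType) (n w : nat) (gam : K) (V : vectType K).
Variable M : YDmod n w gam V.
Hypotheses (n_gt0 : (0 < n)%N) (gam_prim : n.-primitive_root gam).
Variables (al be : K) (r i : int) (v : V).
Hypothesis v_std : standard M al be r i v.

Local Notation S := (ydS M).
Local Notation D := (ydD M).
Local Notation X := (ydX M).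
Local Notation Xi := (ydXi M).
Local Notation G := (ydG M).
Local Notation Y := (ydY M).
Local Notation h := (r + (i %/ n%:Z)%Z * w%:Z, `|(i %% n%:Z)%Z|%N, 0%N).

Lemma standard_neq0 : v != 0. Proof. by case: v_std. Qed.
Lemma standard_X : X v = al *: v. Proof. by case: v_std. Qed.
Lemma standard_G : G v = be *: v. Proof. by case: v_std. Qed.
Lemma standard_D : grouplike_coaction M h v. Proof. by case: v_std. Qed.

Lemma standard_index_supp : h \in S.
Proof.
apply: contraT => /(yd_Dsupp v) Dhv.
by move: standard_neq0; rewrite -Dhv standard_D eqxx /= eqxx.
Qed.

Lemma X_Ypow l : X (iter l Y v) = al *: iter l Y v.
Proof. by elim: l => [|l IH] /=; rewrite ?standard_X // (yd_XY M) IH linearZ. Qed.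

Lemma Xi_Ypow l : al != 0 -> Xi (iter l Y v) = al^-1 *: iter l Y v.
Proof.
move=> al_neq0.
have {1}<- : X (al^-1 *: iter l Y v) = iter l Y v.
  by rewrite linearZ /= X_Ypow scalerA mulVf ?scale1r.
by rewrite (yd_XiX M).
Qed.

Lemma G_Ypow l : G (iter l Y v) = (gam^-1 ^+ l * be) *: iter l Y v.
Proof.
have gam_neq0 : gam != 0 by rewrite (prim_root_eq0 gam_prim) -lt0n (prim_order_gt0 gam_prim).
elim: l => [|l IH] /=; first by rewrite expr0 mul1r standard_G.
have GY x : G (Y x) = gam^-1 *: Y (G x) by rewrite (yd_YG M) scalerA mulVf ?scale1r.
by rewrite GY IH linearZ /= scalerA exprS mulrA.
Qed.

Lemma Ypow_n : iter n Y v = (1 - al ^+ w) *: v.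
Proof. by rewrite (yd_Yn M) (iter_eigen w standard_X) scalerBl scale1r. Qed.

(* n times the projection onto the be-eigenspace of g. *)
Definition G_average : 'End(V) :=
  \sum_(k < n) (be^-1) ^+ k *: iter k (comp_lfun G) \1%VF.

Lemma G_average_Ypow l : (l < n)%N -> be != 0 ->
  G_average (iter l Y v) = (if l == 0%N then n%:R else 0) *: iter l Y v.
Proof.
move=> ln be_neq0.
have iterE k x : iter k (comp_lfun G) \1%VF x = iter k G x.
  by elim: k => [|k IH] /=; rewrite ?id_lfunE // comp_lfunE IH.
rewrite sum_lfunE (eq_bigr (fun k : 'I_n => ((gam^-1 ^+ l) ^+ k) *: iter l Y v)); last first.
  move=> k _; rewrite scale_lfunE iterE (iter_eigen k (G_Ypow l)) scalerA.
  by rewrite exprMn mulrCA -exprMn mulVf // expr1n mulr1.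
rewrite -scaler_suml; case: eqP => [->|l_neq0].
  by rewrite (eq_bigr (fun=> 1)) ?sumr_const ?card_ord // => k _; rewrite expr0 expr1n.
rewrite sum_expr_unity_root ?scale0r //.
  by rewrite -exprM mulnC exprM exprVn (prim_expr_order gam_prim) invr1 expr1n.
rewrite exprVn invr_eq1 -(prim_order_dvd gam_prim).
by apply/negP => /dvdn_leq; rewrite lt0n => /(_ (introN eqP l_neq0)); rewrite leqNgt ln.
Qed.

Lemma D_Ypow (compat : YDcompat M) c l : (l < n)%N ->
  D c (iter l Y v) =
  \sum_(p <- Delta2B n w gam (0%:Z, 0%N, l)) \sum_(q <- conjB n w gam p.2.1.1 h p.2.2)
     (if q.2 == c then (p.1 * q.1) *: actB M p.2.1.2 v else 0).
Proof.
move=> ln; rewrite -[iter l Y v]/(actB M (0%:Z, 0%N, l) v) compat; last first.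
  by rewrite /normB /= n_gt0.
rewrite /ydRHS fcoefV_flatten big_flatten /= big_map; apply: eq_bigr => p _.
set Dp := fcoefV [seq (q.2, (p.1 * q.1) *: actB M p.2.1.2 v)
                   | q <- conjB n w gam p.2.1.1 h p.2.2] c.
transitivity (\sum_(b' <- S) if b' == h then Dp else 0).
  rewrite big_map; apply: eq_bigr => b' _; rewrite standard_D.
  case: (b' =P h) => [->|_] //=.
  by rewrite /fcoefV big_map big1 // => q _; rewrite actB0 scaler0; case: ifP.
by rewrite big_uniq_if_eq ?yd_Suniq // standard_index_supp /Dp /fcoefV big_map.
Qed.

End StandardElement.

Section StandardPair.
Variables (K : fieldType) (n w : nat) (gam : K).
Hypotheses (n_gt0 : (0 < n)%N) (gam_prim : n.-primitive_root gam).
Variables (V W : vectType K) (MV : YDmod n w gam V) (MW : YDmod n w gam W).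
Hypotheses (compatV : YDcompat MV) (compatW : YDcompat MW).
Variables (al be : K) (r i : int) (v : V) (u : W).
Hypotheses (al_neq0 : al != 0) (be_neq0 : be != 0).
Hypotheses (v_std : standard MV al be r i v) (u_std : standard MW al be r i u).

Local Notation YV := (ydY MV).
Local Notation YW := (ydY MW).

Definition Ypow_pairs : seq (V * W) := [seq (iter l YV v, iter l YW u) | l <- iota 0 n].
Local Notation T := <<Ypow_pairs>>%VS.

Lemma Ypow_pair_in l : (l < n)%N -> (iter l YV v, iter l YW u) \in T.
Proof. by move=> ln; apply/memv_span/map_f; rewrite mem_iota. Qed.

Lemma Ypow_pairs_map (U : {vspace (V * W)%type}) (fV : 'End(V)) (fW : 'End(W)) :
  (forall l, (l < n)%N -> (fV (iter l YV v), fW (iter l YW u)) \in U) ->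
  forall a b, (a, b) \in T -> (fV a, fW b) \in U.
Proof.
move=> fgU; apply: pair_map_span => x /mapP [l].
by rewrite mem_iota => /andP [_ ln] ->; apply: fgU.
Qed.

Lemma Ypow_pairs_X : pair_stable T (ydX MV) (ydX MW).
Proof.
apply: Ypow_pairs_map => l ln.
by rewrite (X_Ypow v_std) (X_Ypow u_std) memv_pairZ ?Ypow_pair_in.
Qed.

Lemma Ypow_pairs_Xi : pair_stable T (ydXi MV) (ydXi MW).
Proof.
apply: Ypow_pairs_map => l ln.
by rewrite (Xi_Ypow v_std) // (Xi_Ypow u_std) // memv_pairZ ?Ypow_pair_in.
Qed.

Lemma Ypow_pairs_G : pair_stable T (ydG MV) (ydG MW).
Proof.
apply: Ypow_pairs_map => l ln.
by rewrite (G_Ypow gam_prim v_std) (G_Ypow gam_prim u_std) memv_pairZ ?Ypow_pair_in.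
Qed.

Lemma Ypow_pairs_Y : pair_stable T YV YW.
Proof.
apply: Ypow_pairs_map => l ln; rewrite -!iterS.
case: (ltnP l.+1 n) => [l1n|nl1]; first exact: Ypow_pair_in.
have -> : l.+1 = n by apply/eqP; rewrite eqn_leq ln.
by rewrite (Ypow_n v_std) (Ypow_n u_std) memv_pairZ // (Ypow_pair_in n_gt0).
Qed.

Lemma Ypow_pairs_actB q : (actB MV q v, actB MW q u) \in T.
Proof.
case: q => [[a j] l]; have := Ypow_pair_in n_gt0.
move=> /(pair_stable_iter l Ypow_pairs_Y) /(pair_stable_iter j Ypow_pairs_G).
case: a => m /=; first exact: (pair_stable_iter m Ypow_pairs_X).
exact: (pair_stable_iter m.+1 Ypow_pairs_Xi).
Qed.

Lemma Ypow_pairs_D c : pair_stable T (ydD MV c) (ydD MW c).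
Proof.
apply: Ypow_pairs_map => l ln; rewrite (D_Ypow n_gt0 v_std) // (D_Ypow n_gt0 u_std) //.
apply: (big_ind2 (fun x y => (x, y) \in T)) => [|x1 x2 y1 y2|p _]; rewrite ?mem0v //.
  exact: memvD.
apply: (big_ind2 (fun x y => (x, y) \in T)) => [|x1 x2 y1 y2|q _]; rewrite ?mem0v //.
  exact: memvD.
by case: ifP => _; rewrite ?mem0v // memv_pairZ // Ypow_pairs_actB.
Qed.

Lemma Ypow_pairs_YDsub : YDsub_pair MV MW T.
Proof.
split; [exact: Ypow_pairs_X | exact: Ypow_pairs_Xi | exact: Ypow_pairs_G
  | exact: Ypow_pairs_Y | exact: Ypow_pairs_D].
Qed.

Lemma Ypow_pairs_average a b : (a, b) \in T ->
  (G_average MV be a, G_average MW be b) \in <[(v, u) : V * W]>%VS.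
Proof.
apply: Ypow_pairs_map => l ln.
rewrite (G_average_Ypow gam_prim v_std) // (G_average_Ypow gam_prim u_std) //.
by case: eqP => [->|_]; rewrite ?scale0r ?mem0v // memv_pairZ ?memv_line.
Qed.

Lemma Ypow_pairs_fst_notin : (v, 0) \notin T.
Proof.
apply/negP => /Ypow_pairs_average; rewrite linear0 -[v in G_average MV be v]/(iter 0 YV v).
rewrite (G_average_Ypow gam_prim v_std) // => /memv_line_pair.
move/(_ (standard_neq0 v_std) (standard_neq0 u_std)); rewrite scaler_eq0 eqxx.
by rewrite (negbTE (prim_root_natf_neq0 gam_prim)) (negbTE (standard_neq0 v_std)).
Qed.

Lemma Ypow_pairs_snd_notin : (0, u) \notin T.
Proof.
apply/negP => /Ypow_pairs_average; rewrite linear0 -[u in G_average MW be u]/(iter 0 YW u).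
rewrite (G_average_Ypow gam_prim u_std) // => /memv_line_pair.
move/(_ (standard_neq0 v_std) (standard_neq0 u_std)); rewrite scaler_eq0 eqxx.
by rewrite (negbTE (prim_root_natf_neq0 gam_prim)) (negbTE (standard_neq0 u_std)).
Qed.

Lemma isoYD_of_standard : simpleYD MV -> simpleYD MW -> isoYD MV MW.
Proof.
move=> simV simW; apply: (isoYD_of_YDsub_pair simV simW Ypow_pairs_YDsub).
- exact: (Ypow_pair_in n_gt0).
- exact: Ypow_pairs_fst_notin.
- exact: Ypow_pairs_snd_notin.
Qed.

End StandardPair.

Unset Implicit Arguments. Set Strict Implicit.

Theorem corollary3p21 (K : closedFieldType) (charK : [pchar K] =i pred0)
  (n w : nat) (gam : K) (n_gt0 : (0 < n)%N) (w_gt0 : (0 < w)%N)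
  (gam_prim : n.-primitive_root gam)
  (V W : vectType K) (MV : YDmod n w gam V) (MW : YDmod n w gam W) :
  simpleYD MV -> simpleYD MW ->
  (isoYD MV MW <->
   exists (al be : K) (r i : int),
     [/\ al != 0, be != 0,
         (exists v, standard MV al be r i v)
       & (exists u, standard MW al be r i u)]).
Proof.
move=> simV simW; split.
- move=> iso; have [compV [dimV _]] := simV.
  have [al [be [r [i [v [al_neq0 be_neq0 v_std]]]]]] := exists_standard n_gt0 compV dimV.
  exists al, be, r, i; split=> //; first by exists v.
  exact: standard_of_isoYD iso v_std.
- case=> al [be [r [i [al_neq0 be_neq0 [v v_std] [u u_std]]]]].
  exact: (isoYD_of_standard n_gt0 gam_prim (proj1 simV) (proj1 simW)
    al_neq0 be_neq0 v_std u_std simV simW).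
Qed.
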